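(* If $T\in\mathscr T$ satisfies $T(\mathbb C[\mathfrak h^*_{\mathbb C}])\subseteq\mathbb C[\mathfrak h^*_{\mathbb C}]$, then $T$ lies in the image of the natural map $\mathscr S\to\mathscr T$.
   Context: Let $(X^*,\Phi,X_*,\Phi^\vee)$ be a root datum with Weyl group $W$ and $\mathfrak h^*=X^*\otimes\mathbb R$. Let $\widetilde W=X^*\rtimes W$ (extended affine Weyl group) act on $\mathfrak h^*_{\mathbb C}$ by affine transformations (translations by $X^*$ and the linear $W$-action). An element $s\in\widetilde W$ is a reflection if its fixed-point locus $H_s$ in $\mathfrak h^*_{\mathbb C}$ is an affine hyperplane; let $\widetilde W^\heartsuit$ be the set of reflections and for each $s$ fix an affine function $\ell_s$ with zero locus $H_s$. For $w\in\widetilde W$ let $t_w$ be the operator $(t_wP)(\alpha)=P(w^{-1}\alpha)$ on $\mathbb C[\mathfrak h^*_{\mathbb C}]$ (and on its fraction field $\mathbb C(\mathfrak h^*_{\mathbb C})$). Let $\mathscr R$ be the algebra of endomorphisms of $\mathbb C[\mathfrak h^*_{\mathbb C}]$ generated by all $t_w$ and multiplications by polynomials, viewed as a left $\mathbb C[\mathfrak h^*_{\mathbb C}]$-module. Put $\mathscr S=\mathbb C[\mathfrak h^*_{\mathbb C}][\ell_s^{-1}: s\in\widetilde W^\heartsuit]\otimes_{\mathbb C[\mathfrak h^*_{\mathbb C}]}\mathscr R$ and $\mathscr T=\mathbb C(\mathfrak h^*_{\mathbb C})\otimes_{\mathbb C[\mathfrak h^*_{\mathbb C}]}\mathscr R$,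 regarded as operators on $\mathbb C(\mathfrak h^*_{\mathbb C})$. *)

From HB Require Import structures.
From Stdlib Require List.
From mathcomp Require Import all_boot all_order all_algebra.
Set Implicit Arguments. Unset Strict Implicit. Unset Printing Implicit Defensive.
Import Order.TTheory GRing.Theory Num.Theory.
Local Open Scope ring_scope.

(* X^* = Z^r (row vectors), X_* = Z^r with the standard pairing. *)
Definition ipair (r : nat) (x y : 'rV[int]_r) : int := \sum_i x 0 i * y 0 i.

Definition srefl (r : nat) (x y z : 'rV[int]_r) : 'rV[int]_r := z - ipair z y *: x.

(* A root datum: the finite list of pairs (alpha, alpha^vee); the map
   alpha |-> alpha^vee is a bijection Phi -> Phi^vee. *)
Definition is_root_datum (r : nat) (rd : seq ('rV[int]_r * 'rV[int]_r)) : Prop :=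
  [/\ uniq (map fst rd), uniq (map snd rd),
      (forall p, p \in rd -> ipair p.1 p.2 = 2),
      (forall p q, p \in rd -> q \in rd -> srefl p.1 p.2 q.1 \in map fst rd) &
      (forall p q, p \in rd -> q \in rd -> srefl p.2 p.1 q.2 \in map snd rd)].

Section Complex.
Variable C : numClosedFieldType.
Variable r : nat.

(* h^*_C = C^r (row vectors) *)
Definition ivec (x : 'rV[int]_r) : 'rV[C]_r := map_mx (fun z : int => z%:~R) x.
Definition dotv (u v : 'rV[C]_r) : C := \sum_i u 0 i * v 0 i.

Inductive is_poly : ('rV[C]_r -> C) -> Prop :=
| poly_const (c : C) : is_poly (fun _ => c)
| poly_coord (i : 'I_r) : is_poly (fun v => v 0 i)
| poly_add f g : is_poly f -> is_poly g -> is_poly (fun v => f v + g v)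
| poly_mul f g : is_poly f -> is_poly g -> is_poly (fun v => f v * g v).

(* matrix of s_alpha acting on row vectors: v |-> v - <v,alpha^vee> alpha *)
Definition reflmx (p : 'rV[int]_r * 'rV[int]_r) : 'M[C]_r :=
  1%:M - (ivec p.2)^T *m ivec p.1.

Definition inW (rd : seq ('rV[int]_r * 'rV[int]_r)) (M : 'M[C]_r) : Prop :=
  exists s : seq ('rV[int]_r * 'rV[int]_r),
    all (mem rd) s /\ M = foldr (fun p A => reflmx p *m A) 1%:M s.

(* element (lam, w) of X^* x| W acting affinely: v |-> w v + lam, and its inverse *)
Definition wact (lam : 'rV[int]_r) (M : 'M[C]_r) (v : 'rV[C]_r) : 'rV[C]_r :=
  v *m M + ivec lam.
Definition winv (lam : 'rV[int]_r) (M : 'M[C]_r) (v : 'rV[C]_r) : 'rV[C]_r :=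
  (v - ivec lam) *m invmx M.

(* reflections of the extended affine Weyl group: fixed locus is an affine hyperplane *)
Definition is_refl rd (lam : 'rV[int]_r) (M : 'M[C]_r) : Prop :=
  inW rd M /\
  exists (a : 'rV[C]_r) (c : C), a != 0 /\
    forall v, wact lam M v = v <-> dotv v a = c.

Definition refl_affine rd (l : 'rV[C]_r -> C) : Prop :=
  exists (a : 'rV[C]_r) (c : C) (lam : 'rV[int]_r) (M : 'M[C]_r),
    [/\ is_refl rd lam M,
        (forall v, l v = dotv v a + c) &
        (forall v, l v = 0 <-> wact lam M v = v)].

(* a formal term  (num/den) t_w  with w = (lam, M) *)
Record term := Term {
  t_lam : 'rV[int]_r;
  t_mat : 'M[C]_r;
  t_num : 'rV[C]_r -> C;
  t_den : 'rV[C]_r -> C }.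

(* T = sum of terms is an element of scriptT: rational coefficients, w in W~ *)
Definition T_elem rd (T : seq term) : Prop :=
  forall t, List.In t T ->
    [/\ inW rd (t_mat t), is_poly (t_num t), is_poly (t_den t) &
        exists v, t_den t v != 0].

(* coefficients in C[h^*][l_s^{-1}] : numerator polynomial, denominator a
   product of the l_s *)
Definition S_elem rd (T : seq term) : Prop :=
  forall t, List.In t T ->
    [/\ inW rd (t_mat t), is_poly (t_num t) &
        exists (k : nat) (ls : 'I_k -> 'rV[C]_r -> C),
          (forall i, refl_affine rd (ls i)) /\
          (forall v, t_den t v = \prod_i ls i v)].

(* value at v of T applied to the rational function a/b *)
Definition applyT (T : seq term) (a b : 'rV[C]_r -> C) (v : 'rV[C]_r) : C :=
  \sum_(t <- T) (t_num t v / t_den t v) *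
       (a (winv (t_lam t) (t_mat t) v) / b (winv (t_lam t) (t_mat t) v)).

Definition defined_at (T : seq term) (b : 'rV[C]_r -> C) (v : 'rV[C]_r) : Prop :=
  forall t, List.In t T ->
    t_den t v != 0 /\ b (winv (t_lam t) (t_mat t) v) != 0.

End Complex.

From HB Require Import structures.
From Stdlib Require List.
From Stdlib Require Import FunctionalExtensionality Classical.
From mathcomp Require Import all_boot all_order all_algebra ring.
Import Order.TTheory GRing.Theory Num.Theory.
Local Open Scope ring_scope.
Set Implicit Arguments. Unset Strict Implicit.

(* Write T = sum_w f_w t_w with w ranging over distinct elements of the
   extended affine Weyl group; each f_w is regular on the open set U where all
   denominators of T are nonzero.  For polynomials x and elements w', the
   commutator T (x P) - x(w'^-1 .) T P again preserves polynomials, and its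
   w-coefficient is f_w (x o w^-1 - x o w'^-1).  Iterating over the elements
   w' <> w with coordinate functions x shows that f_w times any product of
   coordinates of the affine maps h_w'(v) = w^-1 v - w'^-1 v is polynomial on
   U.  A nonzero affine map h_w' either has a nonzero constant coordinate, or
   has a nonconstant coordinate l whose zero hyperplane is not contained in
   the zero set of h_w' (then f_w l is divisible by l), or the zero set of
   h_w' is that hyperplane, which is then the fixed locus of the reflection
   w' w^-1.  So f_w times a product of functions l_s is polynomial on U. *)

Lemma In_mem (T : eqType) (x : T) (s : seq T) : List.In x s -> x \in s.
Proof. by elim: s => [|y s IH] //= [->|xs]; rewrite inE ?eqxx // IH ?orbT. Qed.

Lemma In_nth (T : Type) (x0 : T) (s : seq T) i : (i < size s)%N -> List.In (nth x0 s i) s.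
Proof. by elim: s i => [|y s IH] [|i] //= si; [left | right; apply: IH]. Qed.

Lemma mem_map_In (I : Type) (K : eqType) (f : I -> K) (s : seq I) y :
  y \in map f s -> exists2 x, List.In x s & f x = y.
Proof.
elim: s => [|x s IH] //=; rewrite inE => /orP [/eqP ->|/IH [z sz <-]].
  by exists x; [left|].
by exists z; [right|].
Qed.

Lemma eq_big_In (R : nmodType) (I : Type) (s : seq I) (F1 F2 : I -> R) :
  (forall i, List.In i s -> F1 i = F2 i) -> \sum_(i <- s) F1 i = \sum_(i <- s) F2 i.
Proof.
elim: s => [|i s IH] F12; first by rewrite !big_nil.
by rewrite !big_cons F12 ?IH //; [move=> j sj; apply: F12; right | left].
Qed.

Lemma prodf_In_neq0 (R : idomainType) (I : Type) (s : seq I) (F : I -> R) :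
  \prod_(i <- s) F i != 0 <-> forall i, List.In i s -> F i != 0.
Proof.
elim: s => [|i s IH]; first by rewrite big_nil oner_neq0.
rewrite big_cons mulf_eq0 negb_or; split.
  by case/andP=> Fi /IH Fs j [<-|sj] //; apply: Fs.
by move=> F0; rewrite F0 /=; [apply/IH => j sj; apply: F0; right | left].
Qed.

Lemma sum_group_by (R : pzSemiRingType) (I : Type) (K : eqType) (key : I -> K)
    (s : seq I) (f : I -> R) (G : K -> R) :
  \sum_(i <- s) f i * G (key i) =
  \sum_(k <- undup (map key s)) (\sum_(i <- s | key i == k) f i) * G k.
Proof.
under [RHS]eq_bigr do rewrite mulr_suml big_mkcond.
rewrite exchange_big /=; apply: eq_big_In => i si.
have keyi : key i \in undup (map key s).
  by rewrite mem_undup; apply: In_mem (List.in_map key s i si).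
rewrite (big_rem (key i)) //= eqxx big1_seq ?addr0 // => k /andP [_ k_rem].
case: eqP k_rem => // <-; rewrite rem_filter ?undup_uniq //.
by rewrite mem_filter /= eqxx.
Qed.

Section PolynomialFunctions.
Variables (C : numClosedFieldType) (r : nat).
Notation vec := 'rV[C]_r.
Implicit Types (f g N P Q phi : vec -> C) (a e : vec).

Lemma is_poly_ext f g : (forall v, f v = g v) -> is_poly f -> is_poly g.
Proof. by move=> fg; rewrite (functional_extensionality _ _ fg). Qed.

Lemma is_poly_sub f g : is_poly f -> is_poly g -> is_poly (fun v => f v - g v).
Proof.
move=> Pf Pg; apply: poly_add Pf _.
apply: (is_poly_ext (f := fun v => -1 * g v)) => [v|]; first by rewrite mulN1r.
exact: poly_mul (poly_const _ _) Pg.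
Qed.

Lemma is_poly_sum (I : Type) (s : seq I) (F : I -> vec -> C) :
  (forall i, is_poly (F i)) -> is_poly (fun v => \sum_(i <- s) F i v).
Proof.
move=> PF; elim: s => [|i s IH].
  by apply: (is_poly_ext (f := fun _ => 0)) => [v|]; rewrite ?big_nil //; apply: poly_const.
apply: (is_poly_ext (f := fun v => F i v + \sum_(j <- s) F j v)) => [v|].
  by rewrite big_cons.
exact: poly_add.
Qed.

Lemma is_poly_prod (I : Type) (s : seq I) (F : I -> vec -> C) :
  (forall i, List.In i s -> is_poly (F i)) -> is_poly (fun v => \prod_(i <- s) F i v).
Proof.
elim: s => [|i s IH] PF.
  by apply: (is_poly_ext (f := fun _ => 1)) => [v|]; rewrite ?big_nil //; apply: poly_const.
apply: (is_poly_ext (f := fun v => F i v * \prod_(j <- s) F j v)) => [v|].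
  by rewrite big_cons.
by apply: poly_mul; [apply: PF; left | apply: IH => j sj; apply: PF; right].
Qed.

Lemma is_poly_comp P (m : vec -> vec) :
  is_poly P -> (forall i, is_poly (fun v => m v 0 i)) -> is_poly (fun v => P (m v)).
Proof.
move=> PP Pm; elim: PP => [c|i|f g _ Pf _ Pg|f g _ Pf _ Pg].
- exact: poly_const.
- exact: Pm.
- exact: poly_add.
- exact: poly_mul.
Qed.

Lemma dotvC a e : dotv a e = dotv e a.
Proof. by apply: eq_bigr => i _; rewrite mulrC. Qed.

Lemma dotvB a e (c : vec) : dotv (a - e) c = dotv a c - dotv e c.
Proof. by rewrite /dotv -sumrB; apply: eq_bigr => i _; rewrite !mxE mulrBl. Qed.

Lemma dotvZ (s : C) a e : dotv (s *: a) e = s * dotv a e.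
Proof. by rewrite /dotv mulr_sumr; apply: eq_bigr => i _; rewrite mxE mulrA. Qed.

Lemma dotv_delta a i : dotv a (delta_mx 0 i) = a 0 i.
Proof.
rewrite /dotv (bigD1 i) //= big1 ?addr0 => [|j ji]; first by rewrite mxE !eqxx mulr1.
by rewrite mxE (negbTE ji) andbF mulr0.
Qed.

Lemma mulmx_coordE (A : 'M[C]_r) (b v : vec) j :
  (v *m A + b) 0 j = dotv v (col j A)^T + b 0 j.
Proof. by rewrite !mxE; congr (_ + _); apply: eq_bigr => k _; rewrite !mxE. Qed.

Lemma is_poly_affine a (d : C) : is_poly (fun v => dotv v a + d).
Proof.
apply: poly_add (poly_const _ d); apply: is_poly_sum => i.
exact: poly_mul (poly_coord _ i) (poly_const _ (a 0 i)).
Qed.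

Lemma is_poly_comp_affine P (A : 'M[C]_r) (b : vec) :
  is_poly P -> is_poly (fun v => P (v *m A + b)).
Proof.
move=> PP; apply: is_poly_comp PP _ => i.
by apply: is_poly_ext (is_poly_affine _ (b 0 i)) => v; rewrite mulmx_coordE.
Qed.

Lemma is_poly_winv P (lam : 'rV[int]_r) (M : 'M[C]_r) :
  is_poly P -> is_poly (fun v => P (winv lam M v)).
Proof.
move=> /(is_poly_comp_affine (invmx M) (- (ivec C lam *m invmx M))).
by apply: is_poly_ext => v; rewrite /winv mulmxBl.
Qed.

Lemma is_poly_line f : is_poly f -> forall a e : vec,
  exists p : {poly C}, forall t, f (a + t *: e) = p.[t].
Proof.
move=> Pf a e; elim: Pf => [c|i|f1 g _ [p Ep] _ [q Eq]|f1 g _ [p Ep] _ [q Eq]].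
- by exists c%:P => t; rewrite hornerC.
- exists ((a 0 i)%:P + (e 0 i)%:P * 'X) => t.
  by rewrite !mxE hornerD hornerC hornerM hornerX hornerC mulrC.
- by exists (p + q) => t; rewrite hornerD Ep Eq.
- by exists (p * q) => t; rewrite hornerM Ep Eq.
Qed.

(* C has characteristic 0, so the roots 0, 1, 2, ... are all distinct. *)
Lemma horner_eq0 (p : {poly C}) : (forall t, p.[t] = 0) -> p = 0.
Proof.
move=> p0; apply/eqP; apply: contraT => pn0.
suff : (size [seq (i%:R : C) | i <- iota 0 (size p)] < size p)%N.
  by rewrite size_map size_iota ltnn.
apply: max_poly_roots => //; first by apply/allP => x /mapP [i _ ->]; apply/rootP.
by rewrite map_inj_uniq ?iota_uniq // => i j /eqP; rewrite eqr_nat => /eqP.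
Qed.

Lemma is_poly_mul_eq0 P Q : is_poly P -> is_poly Q ->
  (forall v, P v * Q v = 0) -> (exists v, Q v != 0) -> forall v, P v = 0.
Proof.
move=> PP PQ PQ0 [v1 Qv1] v0; apply/eqP; apply: contraT => Pv0.
have [p Ep] := is_poly_line PP v0 (v1 - v0).
have [q Eq] := is_poly_line PQ v0 (v1 - v0).
have : p * q = 0 by apply: horner_eq0 => t; rewrite hornerM -Ep -Eq PQ0.
move/eqP; rewrite mulf_eq0 => /orP [] /eqP z.
- by move: Pv0; rewrite -(addr0 v0) -(scale0r (v1 - v0)) Ep z horner0 eqxx.
- by move: Qv1; rewrite -(subrK v0 v1) addrC -[v1 - v0]scale1r Eq z horner0 eqxx.
Qed.

Lemma is_poly_mul_neq0 P Q : is_poly P -> is_poly Q ->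
  (exists v, P v != 0) -> (exists v, Q v != 0) -> exists v, P v * Q v != 0.
Proof.
move=> PP PQ [v Pv] Qn0; apply: not_all_not_ex => PQ0.
have {}PQ0 w : P w * Q w = 0 by apply/eqP; apply: contraT => /(PQ0 w).
by move: Pv; rewrite (is_poly_mul_eq0 PP PQ PQ0 Qn0) eqxx.
Qed.

Lemma is_poly_prod_neq0 (I : Type) (s : seq I) (F : I -> vec -> C) :
  (forall i, List.In i s -> is_poly (F i) /\ exists v, F i v != 0) ->
  exists v, \prod_(i <- s) F i v != 0.
Proof.
elim: s => [|i s IH] PF; first by exists 0; rewrite big_nil oner_neq0.
have PFs j : List.In j s -> is_poly (F j) /\ exists v, F j v != 0.
  by move=> sj; apply: PF; right.
have [PFi Fi] := PF i (or_introl erefl).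
have [v Fv] := is_poly_mul_neq0 PFi (is_poly_prod (fun j sj => (PFs j sj).1)) Fi (IH PFs).
by exists v; rewrite big_cons.
Qed.

Lemma is_poly_sub_scale_coord phi e i :
  is_poly phi -> is_poly (fun v => (v - phi v *: e) 0 i).
Proof.
move=> Pphi; apply: (is_poly_ext (f := fun v => v 0 i - phi v * e 0 i)).
  by move=> v; rewrite !mxE.
exact: is_poly_sub (poly_coord _ i) (poly_mul Pphi (poly_const _ _)).
Qed.

Lemma is_poly_diff_along e P phi : is_poly P -> is_poly phi ->
  exists Q, is_poly Q /\ forall v, P v - P (v - phi v *: e) = phi v * Q v.
Proof.
move=> PP Pphi.
have Pm := fun i => is_poly_sub_scale_coord e i Pphi.
elim: PP => [c|i|f g _ [Q1 [PQ1 E1]] _ [Q2 [PQ2 E2]]|f g Pf [Q1 [PQ1 E1]] Pg [Q2 [PQ2 E2]]].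
- by exists (fun _ => 0); split; [apply: poly_const | move=> v; rewrite subrr mulr0].
- exists (fun _ => e 0 i); split; first exact: poly_const.
  by move=> v; rewrite !mxE opprB addrC subrK.
- exists (fun v => Q1 v + Q2 v); split; first exact: poly_add.
  by move=> v; rewrite mulrDr -E1 -E2 opprD addrACA.
- exists (fun v => Q1 v * g v + f (v - phi v *: e) * Q2 v); split.
    by apply: poly_add; [exact: poly_mul PQ1 Pg | exact: poly_mul (is_poly_comp Pf Pm) PQ2].
  by move=> v; rewrite mulrDr mulrA -E1 mulrCA -E2 mulrBl mulrBr addrA subrK.
Qed.

Lemma dotv_dual a : a != 0 -> exists e, dotv e a = 1.
Proof.
case/rV0Pn => i ai; exists ((a 0 i)^-1 *: delta_mx 0 i).
by rewrite dotvZ dotvC dotv_delta mulVf.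
Qed.

Lemma affine_neq0 a (d : C) : a != 0 -> exists v, dotv v a + d != 0.
Proof.
case/dotv_dual => e ea; exists ((1 - d) *: e).
by rewrite dotvZ ea mulr1 subrK oner_neq0.
Qed.

Lemma affine_proj_eq0 a e (d : C) v :
  dotv e a = 1 -> dotv (v - (dotv v a + d) *: e) a + d = 0.
Proof. by move=> ea; rewrite dotvB dotvZ ea mulr1 opprD addrA subrr sub0r addNr. Qed.

Lemma is_poly_dvd_affine N a (d : C) : is_poly N -> a != 0 ->
  (forall v, dotv v a + d = 0 -> N v = 0) ->
  exists Q, is_poly Q /\ forall v, N v = (dotv v a + d) * Q v.
Proof.
move=> PN /dotv_dual [e ea] N0.
have [Q [PQ EQ]] := is_poly_diff_along e PN (is_poly_affine a d).
by exists Q; split=> // v; rewrite -EQ (N0 (v - _ *: e)) ?subr0 // affine_proj_eq0.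
Qed.

Lemma is_poly_mul_eq0_affine P Q a (d : C) v0 : is_poly P -> is_poly Q -> a != 0 ->
  dotv v0 a + d = 0 -> Q v0 != 0 ->
  (forall v, dotv v a + d = 0 -> P v * Q v = 0) ->
  forall v, dotv v a + d = 0 -> P v = 0.
Proof.
move=> PP PQ /dotv_dual [e ea] Hv0 Qv0 PQ0 v Hv.
pose p w := w - (dotv w a + d) *: e.
have p_id w : dotv w a + d = 0 -> p w = w by move=> Hw; rewrite /p Hw scale0r subr0.
have Pp i : is_poly (fun w => p w 0 i) by apply: is_poly_sub_scale_coord; apply: is_poly_affine.
rewrite -(p_id v Hv); apply: (is_poly_mul_eq0 (is_poly_comp PP Pp) (is_poly_comp PQ Pp)).
  by move=> w; apply: PQ0; apply: affine_proj_eq0.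
by exists v0; rewrite p_id.
Qed.

End PolynomialFunctions.

Section WeylGroup.
Variables (C : numClosedFieldType) (r : nat) (rd : seq ('rV[int]_r * 'rV[int]_r)).
Hypothesis rd_datum : is_root_datum rd.
Implicit Types M N : 'M[C]_r.

Definition prodW (s : seq ('rV[int]_r * 'rV[int]_r)) : 'M[C]_r :=
  foldr (fun p A => reflmx C p *m A) 1%:M s.

Lemma prodW_cat s1 s2 : prodW (s1 ++ s2) = prodW s1 *m prodW s2.
Proof. by elim: s1 => [|p s1 IH] /=; rewrite ?mul1mx // -mulmxA -IH. Qed.

Lemma reflmx_invol p : p \in rd -> reflmx C p *m reflmx C p = 1%:M.
Proof.
case: rd_datum => _ _ pair2 _ _ prd.
set Y := (ivec C p.2)^T; set X := ivec C p.1.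
have XY : X *m Y = 2%:M.
  apply/matrixP => i j; rewrite !ord1 !mxE.
  rewrite (eq_bigr (fun k => ((p.1 0 k * p.2 0 k)%:~R : C))) => [|k _]; last by rewrite !mxE intrM.
  by rewrite -rmorph_sum /= -/(ipair p.1 p.2) pair2.
rewrite /reflmx -/X -/Y mulmxBl mul1mx mulmxBr mulmx1 -!mulmxA (mulmxA X) XY.
rewrite mul_scalar_mx -scalemxAr -[2%:R]/(1 + 1) scalerDl scale1r.
by rewrite opprB addrK subrK.
Qed.

Lemma prodW_mul_rev s : all (mem rd) s -> prodW s *m prodW (rev s) = 1%:M.
Proof.
elim: s => [|p s IH]; first by rewrite /= mulmx1.
case/andP=> prd srd; rewrite rev_cons -cats1 prodW_cat /= mulmx1.
by rewrite mulmxA -(mulmxA (reflmx C p)) IH // mulmx1 reflmx_invol.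
Qed.

Lemma inW_mul M N : inW rd M -> inW rd N -> inW rd (M *m N).
Proof.
case=> [s1 [s1rd ->]] [s2 [s2rd ->]]; exists (s1 ++ s2).
by rewrite all_cat s1rd s2rd -!/(prodW _) prodW_cat.
Qed.

Lemma inW_inv M : inW rd M -> M \in unitmx /\ inW rd (invmx M).
Proof.
case=> [s [srd ->]]; rewrite -/(prodW s).
have prodWK := prodW_mul_rev srd; have [Mu _] := mulmx1_unit prodWK.
split=> //; exists (rev s); split; first by rewrite all_rev.
by rewrite -/(prodW _) -[invmx _]mulmx1 -prodWK mulmxA mulVmx // mul1mx.
Qed.

Lemma inW_intmx M : inW rd M -> exists Mi : 'M[int]_r, M = map_mx intr Mi.
Proof.
case=> [s [_ ->]]; rewrite -/(prodW s); elim: s => [|p s [Mi EMi]].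
  by exists 1%:M; rewrite map_mx1.
exists ((1%:M - p.2^T *m p.1) *m Mi).
by rewrite [prodW _]/= -/(prodW s) EMi map_mxM map_mxB map_mx1 map_mxM /reflmx map_trmx.
Qed.

End WeylGroup.

Section AffineWeylGroup.
Variables (C : numClosedFieldType) (r : nat) (rd : seq ('rV[int]_r * 'rV[int]_r)).
Hypothesis rd_datum : is_root_datum rd.
Notation vec := 'rV[C]_r.
Notation key := ('rV[int]_r * 'M[C]_r)%type.
Implicit Types (M : 'M[C]_r) (lam : 'rV[int]_r) (u v : vec).

Definition wkinv (k : key) (v : vec) : vec := winv k.1 k.2 v.
Definition winv_diff (k0 k1 : key) (v : vec) : vec := wkinv k0 v - wkinv k1 v.

Lemma winv_diff_affine k0 k1 :
  exists (A : 'M[C]_r) (b : vec), forall v, winv_diff k0 k1 v = v *m A + b.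
Proof.
exists (invmx k0.2 - invmx k1.2), (ivec C k1.1 *m invmx k1.2 - ivec C k0.1 *m invmx k0.2).
move=> v; rewrite /winv_diff /wkinv /winv !mulmxBl mulmxBr.
by rewrite opprB addrACA [RHS]addrACA [X in _ + X = _]addrC.
Qed.

Lemma is_poly_dotv_winv_diff k0 k1 (c : vec) : is_poly (fun v => dotv (winv_diff k0 k1 v) c).
Proof.
have [A [b hE]] := winv_diff_affine k0 k1.
by apply: is_poly_ext (is_poly_comp_affine A b (is_poly_affine c 0)) => v; rewrite hE addr0.
Qed.

Lemma winv_wact lam M u : M \in unitmx -> winv lam M (wact lam M u) = u.
Proof. by move=> Mu; rewrite /winv /wact addrK mulmxK. Qed.

Lemma wact_winv lam M v : M \in unitmx -> wact lam M (winv lam M v) = v.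
Proof. by move=> Mu; rewrite /winv /wact mulmxKV // subrK. Qed.

(* The zero set of winv_diff k0 k1 is the fixed locus of k1 k0^-1. *)
Lemma winv_diff_fixed (k0 k1 : key) : inW rd k0.2 -> inW rd k1.2 ->
  exists lam M, inW rd M /\ forall v, wact lam M v = v <-> winv_diff k0 k1 v = 0.
Proof.
move=> W0 W1; have [U0 W0i] := inW_inv rd_datum W0; have [U1 _] := inW_inv rd_datum W1.
have [Mi EMi] := inW_intmx (inW_mul W0i W1).
exists (k1.1 - k0.1 *m Mi), (invmx k0.2 *m k1.2); split=> [|v]; first exact: inW_mul.
have -> : wact (k1.1 - k0.1 *m Mi) (invmx k0.2 *m k1.2) v = wact k1.1 k1.2 (wkinv k0 v).
  rewrite /wact /wkinv /winv EMi /ivec map_mxB map_mxM -EMi.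
  by rewrite mulmxBl !mulmxA mulmxBl addrCA addrC.
rewrite /winv_diff; split=> [fixv|/eqP]; first by rewrite -{2}fixv /wkinv winv_wact // subrr.
by rewrite subr_eq0 => /eqP ->; rewrite /wkinv wact_winv.
Qed.

Lemma winv_diff_neq0 (k0 k1 : key) : inW rd k0.2 -> inW rd k1.2 -> k0 != k1 ->
  exists v, winv_diff k0 k1 v != 0.
Proof.
move=> W0 W1 k01; apply: NNPP => Z.
have {}Z v : wkinv k0 v = wkinv k1 v.
  by apply/eqP; rewrite -subr_eq0; apply/negPn/negP => Zv; apply: Z; exists v.
have [U0 _] := inW_inv rd_datum W0; have [U1 _] := inW_inv rd_datum W1.
have Eb : ivec C k0.1 *m invmx k0.2 = ivec C k1.1 *m invmx k1.2.
  by have := Z 0; rewrite /wkinv /winv !sub0r !mulNmx => /oppr_inj.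
have EA : invmx k0.2 = invmx k1.2.
  apply/row_matrixP => i; rewrite !rowE.
  by have := Z (delta_mx 0 i); rewrite /wkinv /winv !mulmxBl Eb => /addIr.
have EM : k0.2 = k1.2 by rewrite -(invmxK k0.2) EA invmxK.
have Elam : k0.1 = k1.1.
  have /matrixP E : ivec C k0.1 = ivec C k1.1.
    by rewrite -(mulmxKV U0 (ivec C k0.1)) -(mulmxKV U0 (ivec C k1.1)) Eb EA.
  by apply/matrixP => i j; have := E i j; rewrite !mxE => /eqP; rewrite eqr_int => /eqP.
by move: k01; rewrite [k0]surjective_pairing [k1]surjective_pairing EM Elam eqxx.
Qed.

Lemma refl_affine_zero_set (k0 k1 : key) a d : inW rd k0.2 -> inW rd k1.2 -> a != 0 ->
  (forall v, winv_diff k0 k1 v = 0 <-> dotv v a + d = 0) ->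
  refl_affine rd (fun v => dotv v a + d).
Proof.
move=> W0 W1 a0 Z; have [lam [M [WM fixM]]] := winv_diff_fixed W0 W1.
exists a, d, lam, M; split=> // [|v]; last by rewrite fixM Z.
split=> //; exists a, (- d); split=> // v; rewrite fixM Z.
by split=> [/eqP|->]; rewrite ?addNr // addr_eq0 => /eqP.
Qed.

Lemma is_poly_refl_affine (l : vec -> C) : refl_affine rd l -> is_poly l.
Proof.
by case=> [a [d [_ [_ [_ El _]]]]]; apply: is_poly_ext (is_poly_affine a d) => v; rewrite El.
Qed.

End AffineWeylGroup.

Section Coefficients.
Variables (C : numClosedFieldType) (r : nat) (rd : seq ('rV[int]_r * 'rV[int]_r)).
Hypothesis rd_datum : is_root_datum rd.
Variable T : seq (term C r).
Hypothesis T_scriptT : T_elem rd T.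
Notation vec := 'rV[C]_r.
Notation key := ('rV[int]_r * 'M[C]_r)%type.
Implicit Types (f g N P Q phi : vec -> C) (a c : vec) (k : key).

Definition tkey (t : term C r) : key := (t_lam t, t_mat t).
Definition denT (v : vec) : C := \prod_(t <- T) t_den t v.
(* U is the open set {denT <> 0}; [regular f] says f is in C[h^*][denT^-1] on U. *)
Definition polyU f := exists N, is_poly N /\ forall v, denT v != 0 -> f v = N v.
Definition regular f := polyU (fun v => f v * denT v).
Definition coefT k (v : vec) : C := \sum_(t <- T | tkey t == k) t_num t v / t_den t v.

Lemma inW_tkey k : k \in map tkey T -> inW rd k.2.
Proof. by case/mem_map_In => t /T_scriptT [] ? _ _ _ <-. Qed.

Lemma denT_neq0P v : denT v != 0 <-> forall t, List.In t T -> t_den t v != 0.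
Proof. exact: prodf_In_neq0. Qed.

Lemma is_poly_denT : is_poly denT.
Proof. by apply: is_poly_prod => t /T_scriptT []. Qed.

Lemma denT_neq0 : exists v, denT v != 0.
Proof. by apply: is_poly_prod_neq0 => t /T_scriptT [_ _ Pden]. Qed.

Lemma denT_factor t : List.In t T ->
  exists R, is_poly R /\ forall v, denT v = t_den t v * R v.
Proof.
move=> tT; have [s1 [s2 ET]] := List.in_split _ _ tT.
exists (fun v => \prod_(u <- s1 ++ s2) t_den u v); split.
  apply: is_poly_prod => u su; suff /T_scriptT [] : List.In u T by [].
  rewrite ET; apply: List.in_or_app.
  by case: (List.in_app_or _ _ _ su); [left | right; right].
by move=> v; rewrite /denT ET !big_cat big_cons mulrCA.
Qed.

Lemma polyU_ext f g : (forall v, denT v != 0 -> f v = g v) -> polyU f -> polyU g.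
Proof. by move=> fg [N [PN EN]]; exists N; split=> // v Dv; rewrite -fg // EN. Qed.

Lemma polyU_poly f : is_poly f -> polyU f.
Proof. by exists f. Qed.

Lemma polyU_eq0 P : is_poly P -> (forall v, denT v != 0 -> P v = 0) -> forall v, P v = 0.
Proof.
move=> PP P0; apply: (is_poly_mul_eq0 PP is_poly_denT _ denT_neq0) => v.
by have [->|/P0 ->] := eqVneq (denT v) 0; rewrite ?mulr0 ?mul0r.
Qed.

Lemma polyU_mulr_cst f (c : C) : c != 0 -> polyU (fun v => f v * c) -> polyU f.
Proof.
move=> c0 [N [PN EN]]; exists (fun v => N v * c^-1); split.
  exact: poly_mul PN (poly_const _ _).
by move=> v Dv; rewrite -EN // mulfK.
Qed.

Lemma regular_mulr f p : regular f -> is_poly p -> regular (fun v => f v * p v).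
Proof.
move=> [N [PN EN]] Pp; exists (fun v => N v * p v); split; first exact: poly_mul.
by move=> v Dv; rewrite -EN // mulrAC.
Qed.

Lemma regular_term t : List.In t T -> regular (fun v => t_num t v / t_den t v).
Proof.
move=> tT; have [R [PR ER]] := denT_factor tT; have [_ Pnum _ _] := T_scriptT tT.
exists (fun v => t_num t v * R v); split; first exact: poly_mul.
move=> v Dv; have /denT_neq0P/(_ t tT) den0 := Dv.
by rewrite ER mulrA divfK.
Qed.

Lemma regular_coefT k : regular (coefT k).
Proof.
have : forall t, List.In t T -> regular (fun v => t_num t v / t_den t v) := regular_term.
rewrite /regular /coefT; elim: T => [|t s IH] Rs.
  by apply: polyU_ext (polyU_poly (poly_const _ 0)) => v _; rewrite big_nil mul0r.
have [N1 [PN1 EN1]] := IH (fun u su => Rs u (or_intror su)).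
have [N2 [PN2 EN2]] := Rs t (or_introl erefl).
exists (fun v => (if tkey t == k then N2 v else 0) + N1 v); split.
  by apply: poly_add => //; case: (tkey t == k) => //; apply: poly_const.
by move=> v Dv; rewrite big_cons; case: (tkey t == k); rewrite ?add0r ?mulrDl EN1 // EN2.
Qed.

Lemma polyU_cancel g Q phi : regular g -> is_poly Q -> is_poly phi ->
  (exists v, phi v != 0) -> (forall v, denT v != 0 -> g v * phi v = phi v * Q v) ->
  polyU g.
Proof.
move=> [H [PH EH]] PQ Pphi phi0 E; exists Q; split=> // v Dv.
have PHQ : is_poly (fun v => H v - Q v * denT v).
  by apply: is_poly_sub; [|apply: poly_mul PQ is_poly_denT].
have HQ0 := is_poly_mul_eq0 PHQ Pphi _ phi0.
apply: (mulIf Dv); rewrite EH //; apply/eqP; rewrite -subr_eq0; apply/eqP; apply: HQ0.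
apply: polyU_eq0 (poly_mul PHQ Pphi) _ => w Dw.
by rewrite -EH // mulrBl mulrAC E //; ring.
Qed.

Lemma polyU_div_affine g a (d : C) phi2 v0 : regular g -> a != 0 -> is_poly phi2 ->
  dotv v0 a + d = 0 -> phi2 v0 != 0 ->
  polyU (fun v => g v * (dotv v a + d)) -> polyU (fun v => g v * phi2 v) -> polyU g.
Proof.
move=> Rg a0 P2 Hv0 phi2v0 [N1 [PN1 EN1]] [N2 [PN2 EN2]].
have cross : forall v, N1 v * phi2 v - N2 v * (dotv v a + d) = 0.
  apply: polyU_eq0 => [|v Dv]; last by rewrite -EN1 // -EN2 //; ring.
  exact: is_poly_sub (poly_mul PN1 P2) (poly_mul PN2 (is_poly_affine a d)).
have [Q [PQ EQ]] : exists Q, is_poly Q /\ forall v, N1 v = (dotv v a + d) * Q v.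
  apply: (is_poly_dvd_affine PN1 a0).
  apply: (is_poly_mul_eq0_affine PN1 P2 a0 Hv0 phi2v0) => v Hv.
  by have := cross v; rewrite Hv mulr0 subr0.
apply: (polyU_cancel Rg PQ (is_poly_affine a d) (affine_neq0 d a0)) => v Dv.
by rewrite EN1 // EQ.
Qed.

(* The factors depend only on the affine map winv_diff k k1, not on g. *)
Lemma polyU_clear_factor k k1 : inW rd k.2 -> inW rd k1.2 -> k1 != k ->
  exists ls : seq (vec -> C), (forall l, List.In l ls -> refl_affine rd l) /\
  forall g, regular g -> (forall c, polyU (fun v => g v * dotv (winv_diff k k1 v) c)) ->
    polyU (fun v => g v * \prod_(l <- ls) l v).
Proof.
move=> Wk Wk1; rewrite eq_sym => kk1; have [A [b hE]] := winv_diff_affine k k1.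
have hjE v j : winv_diff k k1 v 0 j = dotv v (col j A)^T + b 0 j by rewrite hE mulmx_coordE.
have coord g : (forall c, polyU (fun v => g v * dotv (winv_diff k k1 v) c)) ->
    forall j, polyU (fun v => g v * winv_diff k k1 v 0 j).
  by move=> Hg j; apply: polyU_ext (Hg (delta_mx 0 j)) => v _; rewrite dotv_delta.
have prod_nil g : polyU g -> polyU (fun v => g v * \prod_(l <- [::]) l v).
  by apply: polyU_ext => v _; rewrite big_nil mulr1.
have [A0|/matrix0Pn [i [j Aij]]] := eqVneq A 0.
  have /rV0Pn [j bj] : b != 0.
    have [v] := winv_diff_neq0 rd_datum Wk Wk1 kk1.
    by rewrite hE A0 mulmx0 add0r.
  exists [::]; split=> // g _ /coord /(_ j) Hg; apply/prod_nil/(polyU_mulr_cst bj).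
  by apply: polyU_ext Hg => v _; rewrite hE A0 mulmx0 add0r.
set a := (col j A)^T; have a0 : a != 0 by apply/rV0Pn; exists i; rewrite !mxE.
have Hj g : polyU (fun v => g v * winv_diff k k1 v 0 j) ->
    polyU (fun v => g v * (dotv v a + b 0 j)).
  by apply: polyU_ext => v _; rewrite hjE.
have [[v0 [Hv0 /rV0Pn [j2 hj2]]]|Z] :=
  classic (exists v0, dotv v0 a + b 0 j = 0 /\ winv_diff k k1 v0 != 0).
  exists [::]; split=> // g Rg /coord Hg; apply/prod_nil.
  apply: (polyU_div_affine Rg a0 _ Hv0 hj2 (Hj g (Hg j)) (Hg j2)).
  by apply: is_poly_ext (is_poly_affine _ (b 0 j2)) => v; rewrite hjE.
exists [:: fun v => dotv v a + b 0 j]; split.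
  move=> l [<-|//]; apply: (refl_affine_zero_set rd_datum Wk Wk1 a0) => v.
  split=> [h0|]; first by rewrite -hjE h0 mxE.
  by move=> Hv; apply: NNPP => hv; apply: Z; exists v; split=> //; apply/eqP.
by move=> g _ /coord Hg; apply: polyU_ext (Hj g (Hg j)) => v _; rewrite big_cons big_nil mulr1.
Qed.

Lemma polyU_clear_factors k (ks : seq key) : inW rd k.2 -> uniq ks ->
  (forall k1, k1 \in ks -> inW rd k1.2 /\ k1 != k) ->
  forall g, regular g ->
  (forall cs : key -> vec,
     polyU (fun v => g v * \prod_(k1 <- ks) dotv (winv_diff k k1 v) (cs k1))) ->
  exists ls : seq (vec -> C), (forall l, List.In l ls -> refl_affine rd l) /\
    polyU (fun v => g v * \prod_(l <- ls) l v).
Proof.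
move=> Wk; elim: ks => [|k1 ks IH] /= ks_uniq Wks g Rg Hg.
  by exists [::]; split=> //; apply: polyU_ext (Hg (fun _ => 0)) => v _; rewrite !big_nil.
case/andP: ks_uniq => k1_ks ks_uniq.
have [Wk1 k1k] := Wks k1 (mem_head _ _).
have [ls1 [Rls1 clear1]] := polyU_clear_factor Wk Wk1 k1k.
have Pls1 : is_poly (fun v => \prod_(l <- ls1) l v).
  by apply: is_poly_prod => l /Rls1 /is_poly_refl_affine.
have [||ls2 [Rls2 Hls2]] := IH ks_uniq _ _ (regular_mulr Rg Pls1).
- by move=> k2 ks_k2; apply: Wks; rewrite inE ks_k2 orbT.
- move=> cs; pose gcs v := g v * \prod_(k2 <- ks) dotv (winv_diff k k2 v) (cs k2).
  have Pcs : is_poly (fun v => \prod_(k2 <- ks) dotv (winv_diff k k2 v) (cs k2)).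
    by apply: is_poly_prod => k2 _; apply: is_poly_dotv_winv_diff.
  have /clear1 : regular gcs by apply: regular_mulr.
  case=> [c|N [PN EN]].
    pose cs' k2 := if k2 == k1 then c else cs k2.
    apply: polyU_ext (Hg cs') => v _.
    rewrite big_cons /cs' eqxx /gcs -mulrA [X in _ = _ * X]mulrC; congr (_ * (_ * _)).
    by apply: eq_big_seq => k2 ks_k2; case: eqP ks_k2 => // ->; rewrite (negbTE k1_ks).
  by exists N; split=> // v Dv; rewrite -EN // /gcs mulrAC.
exists (ls1 ++ ls2); split.
  by move=> l ls_l; case: (List.in_app_or _ _ _ ls_l); [apply: Rls1 | apply: Rls2].
by apply: polyU_ext Hls2 => v _; rewrite big_cat mulrA.
Qed.

Hypothesis T_poly : forall P : vec -> C, is_poly P ->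
  exists Q : vec -> C, is_poly Q /\
    forall v, (forall t, List.In t T -> t_den t v != 0) -> Q v = applyT T P (fun _ => 1) v.

Lemma polyU_commutator (xs : seq ((vec -> C) * key)) P :
  (forall x, List.In x xs -> is_poly x.1) -> is_poly P ->
  polyU (fun v => \sum_(t <- T) t_num t v / t_den t v *
     \prod_(x <- xs) (x.1 (wkinv (tkey t) v) - x.1 (wkinv x.2 v)) * P (wkinv (tkey t) v)).
Proof.
elim: xs P => [|[x k] xs IH] P Pxs PP.
  have [Q [PQ EQ]] := T_poly PP; exists Q; split=> // v /denT_neq0P Dv.
  by rewrite EQ //; apply: eq_bigr => t _; rewrite big_nil mulr1 divr1.
have Pxs' y : List.In y xs -> is_poly y.1 by move=> ?; apply: Pxs; right.
have Px : is_poly x := Pxs (x, k) (or_introl erefl).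
have [N1 [PN1 EN1]] := IH _ Pxs' (poly_mul Px PP).
have [N2 [PN2 EN2]] := IH _ Pxs' PP.
exists (fun v => N1 v - x (wkinv k v) * N2 v); split.
  exact: is_poly_sub PN1 (poly_mul (is_poly_winv k.1 k.2 Px) PN2).
move=> v Dv; rewrite -EN1 // -EN2 // mulr_sumr -sumrB; apply: eq_bigr => t _.
by rewrite big_cons /=; ring.
Qed.

Lemma coefT_denominator k : k \in map tkey T ->
  exists ls : seq (vec -> C), (forall l, List.In l ls -> refl_affine rd l) /\
    polyU (fun v => coefT k v * \prod_(l <- ls) l v).
Proof.
move=> kT; set ks := [seq k1 <- undup (map tkey T) | k1 != k].
have ks_uniq : uniq ks by rewrite filter_uniq ?undup_uniq.
apply: (polyU_clear_factors (inW_tkey kT) ks_uniq _ (regular_coefT k)).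
  by move=> k1; rewrite mem_filter mem_undup => /andP [k1k /inW_tkey Wk1].
move=> cs; pose xs := [seq ((fun u => dotv u (cs k1)), k1) | k1 <- ks].
have Pxs x : List.In x xs -> is_poly x.1.
  case/List.in_map_iff => k1 [<- _].
  by apply: is_poly_ext (is_poly_affine (cs k1) 0) => v; rewrite addr0.
apply: polyU_ext (polyU_commutator Pxs (poly_const _ 1)) => v _.
rewrite /coefT mulr_suml [RHS]big_mkcond; apply: eq_big_In => t tT; rewrite mulr1 big_map.
case: eqP => [tk|tk].
  by congr (_ * _); apply: eq_bigr => k1 _; rewrite tk -dotvB.
have tks : tkey t \in ks.
  rewrite mem_filter mem_undup; apply/andP; split; first exact/eqP.
  exact: In_mem (List.in_map tkey T t tT).
by rewrite (big_rem (tkey t) tks) /= subrr mul0r mulr0.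
Qed.

Lemma terms_of_keys (ks : seq key) : {subset ks <= map tkey T} ->
  exists S : seq (term C r), [/\ S_elem rd S, map tkey S = ks &
    forall t v, List.In t S -> denT v != 0 -> t_num t v = coefT (tkey t) v * t_den t v].
Proof.
elim: ks => [|k ks IH] ksT; first by exists [::].
have [|S [SS keyS numS]] := IH; first by move=> k1 ks_k1; apply: ksT; rewrite inE ks_k1 orbT.
have kT : k \in map tkey T by apply: ksT; rewrite mem_head.
have [ls [Rls [N [PN EN]]]] := coefT_denominator kT.
exists (Term k.1 k.2 N (fun v => \prod_(l <- ls) l v) :: S); split=> /=.
- move=> t [<-|/SS //]; split=> //=; first exact: inW_tkey.
  exists (size ls), (fun i => nth (fun _ => 1) ls i); split=> [i|v]; first exact/Rls/In_nth.
  by rewrite (big_nth (fun _ => 1)) big_mkord.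
- by rewrite keyS; congr (_ :: _); exact/esym/surjective_pairing.
- by move=> t v [<-|St] Dv; [rewrite /= -EN | exact: numS].
Qed.

End Coefficients.

Unset Implicit Arguments.

Theorem mainTheorem7 (C : numClosedFieldType) (r : nat)
    (rd : seq ('rV[int]_r * 'rV[int]_r)) (Hrd : is_root_datum rd)
    (T : seq (term C r)) (HT : T_elem rd T)
    (Hpres : forall P : 'rV[C]_r -> C, is_poly P ->
       exists Q : 'rV[C]_r -> C, is_poly Q /\
         forall v, (forall t, List.In t T -> t_den t v != 0) ->
           Q v = applyT T P (fun _ => 1) v) :
  exists S : seq (term C r), S_elem rd S /\
    forall a b : 'rV[C]_r -> C, is_poly a -> is_poly b -> (exists v, b v != 0) ->
      forall v, defined_at T b v -> defined_at S b v ->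
        applyT T a b v = applyT S a b v.
Proof.
have [|S [SS keyS numS]] := terms_of_keys Hrd HT Hpres (ks := undup [seq tkey t | t <- T]).
  by move=> k; rewrite mem_undup.
exists S; split=> // a b _ _ _ v defT defS.
have Dv : denT T v != 0 by apply/denT_neq0P => t /defT [].
pose G k := a (wkinv k v) / b (wkinv k v).
have -> : applyT T a b v = \sum_(k <- undup [seq tkey t | t <- T]) coefT T k v * G k.
  exact: sum_group_by.
rewrite -keyS big_map; apply: eq_big_In => t St.
by have [den0 _] := defS t St; rewrite numS ?mulfK.
Qed.
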